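(* Let $\alpha\in\{0,1,2\}^*$ (leading zeros allowed), $x=[\![\alpha]\!]_3$, and $\gamma=\mathrm{enc}(\alpha)=\gamma_{n-1}\cdots\gamma_0$. Run the $x/2$ FST from initial state $0$ on the input sequence $\gamma_{n-1},\gamma_{n-2},\dots,\gamma_0$ (most significant symbol first), and let $\gamma'_{n-1},\dots,\gamma'_0$ be the output symbols in the order produced. Then $[\![\gamma'_{n-1}\cdots\gamma'_0]\!]_{3'}=\lfloor x/2\rfloor$, and the state of the FST after reading all of $\gamma$ equals $x\bmod 2$.
   Context: Strings are indexed from the right; $[\![\alpha]\!]_3=\sum_i\alpha_i3^i$. Base $3'$: words over $\{0,\bar0,1,\bar1\}$ with trit values $0\mapsto0,\bar0\mapsto1,1\mapsto1,\bar1\mapsto2$ and $[\![\gamma]\!]_{3'}=\sum_i\mathrm{val}(\gamma_i)3^i$. The encoding $\mathrm{enc}:\{0,1,2\}^*\to\{0,\bar0,1,\bar1\}^*$ acts symbol by symbol: $0\mapsto0$, $2\mapsto\bar1$, and a digit $\alpha_i=1$ maps to $1$ if there exists $j<i$ with $\alpha_j\ne1$ and the largest such $j$ has $\alpha_j=2$, and to $\bar0$ otherwise. A transition $(q,a,b,q')$ means: in state $q$, reading $a$, write $b$ and move to $q'$. The $x/2$ FST has states $\{0,1\}$, alphabet $\{0,\bar0,1,\bar1\}$, and transitions: $(0,0,0,0)$, $(0,\bar0,0,1)$, $(0,1,0,1)$, $(0,\bar1,\bar0,0)$, $(1,0,1,1)$, $(1,\bar0,\bar1,0)$, $(1,1,\bar1,0)$,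 $(1,\bar1,\bar1,1)$. (Equivalently, identifying $0,\bar0,1,\bar1$ with pairs $(0,0),(0,1),(1,0),(1,1)$: from state $s_1$ reading $(s_0,c_0)$ it writes $(s_1,[s_0+c_0+s_1\ge2])$ and moves to $(s_0+c_0+s_1)\bmod 2$.) *)

From mathcomp Require Import all_boot.
Set Implicit Arguments. Unset Strict Implicit. Unset Printing Implicit Defensive.

(* Words are represented as lists LEAST significant symbol first:
   the list [:: a_0; a_1; ...; a_{n-1}] stands for the string a_{n-1}...a_0. *)

Fixpoint val3 (a : seq nat) : nat :=
  if a is d :: a' then d + 3 * val3 a' else 0.

Inductive sym := S0 | S0b | S1 | S1b.

Definition trit (s : sym) : nat :=
  match s with S0 => 0 | S0b => 1 | S1 => 1 | S1b => 2 end.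

Fixpoint val3' (g : seq sym) : nat :=
  if g is s :: g' then trit s + 3 * val3' g' else 0.

Fixpoint prev_non1 (a : seq nat) (i : nat) : option nat :=
  if i is k.+1 then
    (if nth 1 a k != 1 then Some (nth 1 a k) else prev_non1 a k)
  else None.

Definition enc_digit (a : seq nat) (i : nat) : sym :=
  match nth 0 a i with
  | 0 => S0
  | 1 => if prev_non1 a i == Some 2 then S1 else S0b
  | _ => S1b
  end.

Definition enc (a : seq nat) : seq sym := mkseq (enc_digit a) (size a).

Definition step (q : nat) (a : sym) : sym * nat :=
  if q == 0 then
    match a with
    | S0 => (S0, 0) | S0b => (S0, 1) | S1 => (S0, 1) | S1b => (S0b, 0)
    end
  else
    match a with
    | S0 => (S1, 1) | S0b => (S1b, 0) | S1 => (S1b, 0) | S1b => (S1b, 1)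
    end.

Fixpoint run (q : nat) (w : seq sym) : seq sym * nat :=
  if w is a :: w' then
    let: (b, q') := step q a in
    let: (out, qf) := run q' w' in (b :: out, qf)
  else ([::], q).

From mathcomp Require Import all_boot.
From mathcomp Require Import zify.

(* The x/2 transducer performs schoolbook long division by 2 in base 3,
   most significant digit first: its state is the running remainder r, and
   on reading a symbol of trit value t it outputs the quotient digit of
   3r + t by 2 (as a base-3' symbol of that trit value) and keeps the new
   remainder.  Hence a single step satisfies 2*(output) + r' = 3r + t.

   The theorem is then Euclidean division of [[a]]_3 by 2. *)

Lemma val3'_cat (s t : seq sym) :
  val3' (s ++ t) = val3' s + 3 ^ size s * val3' t.
Proof. by elim: s => [|a s IH] /=; [rewrite mul1n | rewrite IH expnS; lia]. Qed.

Lemma step_division (q : nat) (a : sym) : q < 2 ->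
  2 * trit (step q a).1 + (step q a).2 = 3 * q + trit a /\ (step q a).2 < 2.
Proof. by case: q => [|[|//]] _; case: a. Qed.

Lemma size_run (q : nat) (w : seq sym) : size (run q w).1 = size w.
Proof.
elim: w q => [|a w IH] q //=.
by case: (step q a) => b q'; case E: (run q' w) => [out qf] /=; rewrite -(IH q') E.
Qed.

Lemma run_division (w : seq sym) (q : nat) : q < 2 ->
  (run q w).2 < 2 /\
  2 * val3' (rev (run q w).1) + (run q w).2 = q * 3 ^ size w + val3' (rev w).
Proof.
elim: w q => [|a w IH] q q_lt2 /=; first by rewrite muln1 addnC.
have [step_eq q'_lt2] := @step_division q a q_lt2.
have size_out := size_run (step q a).2 w.
case: (step q a) step_eq q'_lt2 size_out => b q' /= step_eq q'_lt2 size_out.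
have [qf_lt2 run_eq] := IH q' q'_lt2.
case: (run q' w) size_out qf_lt2 run_eq => out qf /= size_out qf_lt2 run_eq.
split=> //.
rewrite !rev_cons -!cats1 !val3'_cat /= !size_rev size_out expnS !muln0 !addn0.
have scaled : (2 * trit b + q') * 3 ^ size w = (3 * q + trit a) * 3 ^ size w.
  by rewrite step_eq.
move: scaled run_eq; set N := 3 ^ size w; clear; nia.
Qed.

Lemma val3'_trits (g : seq sym) : val3' g = val3 (map trit g).
Proof. by elim: g => //= a g ->. Qed.

Lemma trit_enc_digit (a : seq nat) (i : nat) :
  nth 0 a i < 3 -> trit (enc_digit a i) = nth 0 a i.
Proof. by rewrite /enc_digit; case: (nth 0 a i) => [|[|[|]]] //= _; case: ifP. Qed.

Lemma val3'_enc (a : seq nat) : all (fun d => d < 3) a -> val3' (enc a) = val3 a.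
Proof.
move=> digits; rewrite val3'_trits /enc /mkseq -map_comp -/(mkseq _ _).
congr val3; rewrite -[RHS](mkseq_nth 0); apply: eq_mkseq => i /=.
have [i_lt | i_ge] := ltnP i (size a); last by rewrite /enc_digit nth_default.
by apply: trit_enc_digit; apply: (allP digits); apply: mem_nth.
Qed.

Theorem mainTheorem9 (alpha : seq nat) :
  all (fun d => d < 3) alpha ->
  val3' (rev (run 0 (rev (enc alpha))).1) = val3 alpha %/ 2 /\
  (run 0 (rev (enc alpha))).2 = val3 alpha %% 2.
Proof.
move=> digits.
have [state_lt2 division] := @run_division (rev (enc alpha)) 0 isT.
rewrite revK val3'_enc // mul0n add0n in division.
by rewrite -division mulnC divnMDl // modnMDl divn_small // modn_small // addn0.
Qed.
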